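(* Under the hypotheses and notation of the Hankel matrix representation below, the $2^N\times2^{N-1}$ submatrix $\mathbf H(:,1{:}2^{N-1})$ consisting of the first $2^{N-1}$ columns of $\mathbf H$ satisfies $$\mathbf H(:,1{:}2^{N-1})=\sum_{t_1}\cdots\sum_{t_{N-1}}\mathbf H^{(N)}_{1,t_{N-1}}(:,1)\otimes\mathbf H^{(N-1)}_{t_{N-1},t_{N-2}}\otimes\cdots\otimes\mathbf H^{(1)}_{t_1,1},$$ where $\mathbf H^{(N)}_{1,t_{N-1}}(:,1)\in\mathbb R^{2\times1}$ is the first column of $\mathbf H^{(N)}_{1,t_{N-1}}$.
   Context: Setting: $N\ge2$; $\mathbf s=[s_1,\dots,s_{2^N}]^{\mathrm T}$ given in TT format $s_{(k_1,\dots,k_N)}=\sum_{r_1=1}^{R_1}\cdots\sum_{r_{N-1}=1}^{R_{N-1}}s^{(1)}_{1,k_1,r_1}s^{(2)}_{r_1,k_2,r_2}\cdots s^{(N)}_{r_{N-1},k_N,1}$ ($k_m\in\{1,2\}$, $R_0=R_N=1$), where $(k_1,\dots,k_N)=k_1+2(k_2-1)+\cdots+2^{N-1}(k_N-1)$. $\mathbf H\in\mathbb R^{2^N\times2^N}$ has entries $\mathbf H_{ij}=s_{2^N+1-i-j}$ if $i+j\le2^N$ and $0$ otherwise. With $\mathbf P=\begin{bmatrix}0&1\\1&0\end{bmatrix}$, $\mathbf Q=\begin{bmatrix}1&0\\0&0\end{bmatrix}$, $\mathbf R=\begin{bmatrix}0&0\\0&1\end{bmatrix}$, block matrices are $\widetilde{\mathbf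 M}^{(N)}_1=[\mathbf P\ \mathbf Q]$, $\widetilde{\mathbf M}^{(n)}_1=\begin{bmatrix}\mathbf P&\mathbf Q\\\mathbf 0&\mathbf R\end{bmatrix}$ ($2\le n\le N-1$), $\widetilde{\mathbf M}^{(1)}_1=\begin{bmatrix}\mathbf Q\\\mathbf R\end{bmatrix}$, $\widetilde{\mathbf M}^{(N)}_2=[\mathbf Q\ \mathbf 0]$, $\widetilde{\mathbf M}^{(n)}_2=\begin{bmatrix}\mathbf Q&\mathbf 0\\\mathbf R&\mathbf P\end{bmatrix}$ ($2\le n\le N-1$), $\widetilde{\mathbf M}^{(1)}_2=\begin{bmatrix}\mathbf 0\\\mathbf P\end{bmatrix}$; $\mathbf M^{(n)}_{q_n,k,q_{n-1}}$ is the $(q_n,q_{n-1})$-th $2\times2$ block of $\widetilde{\mathbf M}^{(n)}_k$ ($q_N=q_0=1$). For $t_n=(r_n,q_n)\in\{1,\dots,R_n\}\times\{1,2\}$ (with $t_N=t_0=1$ meaning $(1,1)$), $\mathbf H^{(n)}_{(r_n,q_n),(r_{n-1},q_{n-1})}=\sum_{k=1}^2 s^{(n)}_{r_{n-1},k,r_n}\mathbf M^{(n)}_{q_n,k,q_{n-1}}\in\mathbb R^{2\times2}$. $\otimes$ is the Kronecker product, with the index of the right factor varying fastest. Sums over $t_n$ range over all $2R_n$ pairs. *)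

From HB Require Import structures.
From mathcomp Require Import all_boot all_order all_algebra.
Set Implicit Arguments. Unset Strict Implicit. Unset Printing Implicit Defensive.
Import Order.TTheory GRing.Theory Num.Theory.
Local Open Scope ring_scope.

Lemma ord_mul_pos_r (m1 m2 : nat) (i : 'I_(m1 * m2)) : (0 < m2)%N.
Proof.
have : (nat_of_ord i < m1 * m2)%N := ltn_ord i.
move: (nat_of_ord i); clear i; by case: m2 => // k; rewrite muln0.
Qed.

Lemma ord_div_proof (m1 m2 : nat) (i : 'I_(m1 * m2)) : (i %/ m2 < m1)%N.
Proof. by rewrite ltn_divLR ?(ord_mul_pos_r i) // mulnC. Qed.

Lemma ord_mod_proof (m1 m2 : nat) (i : 'I_(m1 * m2)) : (i %% m2 < m2)%N.
Proof. by rewrite ltn_pmod ?(ord_mul_pos_r i). Qed.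

Definition ord_hi (m1 m2 : nat) (i : 'I_(m1 * m2)) : 'I_m1 := Ordinal (ord_div_proof i).
Definition ord_lo (m1 m2 : nat) (i : 'I_(m1 * m2)) : 'I_m2 := Ordinal (ord_mod_proof i).

Definition kron (R : pzRingType) (m1 n1 m2 n2 : nat)
  (A : 'M[R]_(m1, n1)) (B : 'M[R]_(m2, n2)) : 'M[R]_(m1 * m2, n1 * n2) :=
  \matrix_(i, j) (A (ord_hi i) (ord_hi j) * B (ord_lo i) (ord_lo j)).

Fixpoint kron_chain (R : pzRingType) (n : nat) (f : nat -> 'M[R]_2) : 'M[R]_(2 ^ n) :=
  match n return 'M[R]_(2 ^ n) with
  | 0 => 1%:M
  | n'.+1 => castmx (esym (expnS 2 n'), esym (expnS 2 n'))
                    (kron (f n'.+1) (kron_chain n' f))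
  end.

Fixpoint multi_idx (b : seq nat) : seq (seq nat) :=
  match b with
  | [::] => [:: [::]]
  | n :: b' => [seq i :: t | i <- iota 0 n, t <- multi_idx b']
  end.

(* ---------- Conventions: everything is 0-based.
   Rk n       = R_n  (n = 0..N), with R_0 = R_N = 1.
   core n r k r' = s^{(n)}_{r+1, k+1, r'+1}  for n = 1..N,
                  r < R_{n-1}, k < 2, r' < R_n.
   Given rs = [r_1; ...; r_{N-1}] (0-based), full_idx rs = [r_0; r_1; ...; r_N]
   with r_0 = r_N = 0 (i.e. the 1-based index 1). *)
Definition full_idx (rs : seq nat) : seq nat := 0%N :: rcons rs 0%N.

Definition rank_bounds (N : nat) (Rk : nat -> nat) : seq nat :=
  [seq Rk n | n <- iota 1 N.-1].

(* binary digit m of j: k_{m+1} - 1 for the 0-based index j of s *)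
Definition digit (j m : nat) : nat := (j %/ 2 ^ m) %% 2.

(* s_{j+1} (0-based index j < 2^N), given in TT format *)
Definition tt_entry (R : pzRingType) (N : nat) (Rk : nat -> nat)
  (core : nat -> nat -> nat -> nat -> R) (j : nat) : R :=
  \sum_(rs <- multi_idx (rank_bounds N Rk))
     \prod_(m < N) core m.+1 (nth 0%N (full_idx rs) m) (digit j m)
                             (nth 0%N (full_idx rs) m.+1).

(* The Hankel matrix H (0-based i, j): H_{i+1,j+1} = s_{2^N - 1 - i - j}
   if (i+1)+(j+1) <= 2^N, else 0. *)
Definition hankel (R : pzRingType) (N : nat) (Rk : nat -> nat)
  (core : nat -> nat -> nat -> nat -> R) : 'M[R]_(2 ^ N) :=
  \matrix_(i, j) (if (i + j + 2 <= 2 ^ N)%N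
                  then tt_entry N Rk core (2 ^ N - 2 - i - j)%N
                  else 0).

Lemma exp_half_le (N : nat) : (2 ^ (N - 1) <= 2 ^ N)%N.
Proof. by rewrite leq_pexp2l // leq_subr. Qed.

Definition hankel_left (R : pzRingType) (N : nat) (Rk : nat -> nat)
  (core : nat -> nat -> nat -> nat -> R) : 'M[R]_(2 ^ N, 2 ^ (N - 1)) :=
  colsub (widen_ord (exp_half_le N)) (hankel N Rk core).

Section Blocks.
Variable R : pzRingType.

Definition Pm : 'M[R]_2 := \matrix_(i, j) (if i != j then 1 else 0).
Definition Qm : 'M[R]_2 := \matrix_(i, j) (if (i == 0 :> nat) && (j == 0 :> nat) then 1 else 0).
Definition Rm : 'M[R]_2 := \matrix_(i, j) (if (i == 1 :> nat) && (j == 1 :> nat) then 1 else 0).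

(* k = 0,1 stand for the paper's k = 1,2 *)
Definition Mt_last (k : nat) : 'M[R]_(2, 2 + 2) :=
  if k == 0%N then row_mx Pm Qm else row_mx Qm 0.
Definition Mt_mid (k : nat) : 'M[R]_(2 + 2, 2 + 2) :=
  if k == 0%N then block_mx Pm Qm 0 Rm else block_mx Qm 0 Rm Pm.
Definition Mt_first (k : nat) : 'M[R]_(2 + 2, 2) :=
  if k == 0%N then col_mx Qm Rm else col_mx 0 Pm.

Definition blk_row (A : 'M[R]_(2, 2 + 2)) (q' : nat) : 'M[R]_2 :=
  if q' == 0%N then lsubmx A else rsubmx A.
Definition blk_col (A : 'M[R]_(2 + 2, 2)) (q : nat) : 'M[R]_2 :=
  if q == 0%N then usubmx A else dsubmx A.
Definition blk (A : 'M[R]_(2 + 2, 2 + 2)) (q q' : nat) : 'M[R]_2 :=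
  blk_row (if q == 0%N then usubmx A else dsubmx A) q'.

(* M^{(n)}_{q_n, k, q_{n-1}} (0-based q_n, k, q_{n-1}); for n = N only
   q_N = 0 occurs, for n = 1 only q_0 = 0 occurs. *)
Definition Mblock (N n q k q' : nat) : 'M[R]_2 :=
  if n == N then blk_row (Mt_last k) q'
  else if n == 1%N then blk_col (Mt_first k) q
  else blk (Mt_mid k) q q'.

Definition Hcore (N : nat) (core : nat -> nat -> nat -> nat -> R)
  (n rn qn rn1 qn1 : nat) : 'M[R]_2 :=
  \sum_(k < 2) core n rn1 k rn *: Mblock N n qn k qn1.

End Blocks.

Lemma exp_split (N : nat) : (0 < N)%N -> (2 ^ N = 2 * 2 ^ (N - 1))%N.
Proof. by case: N => // n _; rewrite subn1 /= expnS. Qed.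

From HB Require Import structures.
From mathcomp Require Import all_boot all_order all_algebra.
From mathcomp Require Import zify.
Set Implicit Arguments. Unset Strict Implicit. Unset Printing Implicit Defensive.
Import Order.TTheory GRing.Theory Num.Theory.
Local Open Scope ring_scope.

(* Entrywise, the n-th Kronecker factor only sees the n-th binary digits a, b
   of the row and column indices, and H^{(n)} sums, over the digit k of the
   index of s, the TT core times M^{(n)}_{q_n,k,q_{n-1}}.  That block is the
   indicator of one step of binary addition, a + b + k + q_{n-1} = t_n + 2 q_n,
   where t_n is the n-th digit of 2^N - 2 and q_{n-1}, q_n are the incoming and
   outgoing carries.  Summing over the carries leaves the indicator of
   i + j + K = 2^N - 2 (0-based indices), and summing over the ranks turns the
   core products into s_K, which is H_{ij}.  The first 2^{N-1} columns are those
   whose top digit b vanishes, the case encoded by the first column of H^{(N)}. *)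

Lemma digit_lt2 i m : (digit i m < 2)%N.
Proof. by rewrite /digit ltn_pmod. Qed.

Lemma digit_modn i m n : (m < n)%N -> digit (i %% 2 ^ n) m = digit i m.
Proof.
move=> lt_mn; rewrite /digit.
have -> : (2 ^ n = 2 ^ (n - m).-1 * 2 * 2 ^ m)%N.
  by rewrite -expnSr prednK ?subn_gt0 // -expnD subnK // ltnW.
rewrite {2}(divn_eq i (2 ^ (n - m).-1 * 2 * 2 ^ m)).
by rewrite !mulnA divnMDl ?expn_gt0 // modnMDl.
Qed.

Lemma digit_small i m : (i < 2 ^ m)%N -> digit i m = 0%N.
Proof. by move=> h; rewrite /digit divn_small. Qed.

Lemma digit_top i n : (i < 2 ^ n.+1)%N -> digit i n = (i %/ 2 ^ n)%N.
Proof.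
move=> h; rewrite /digit modn_small // ltn_divLR ?expn_gt0 //.
by rewrite mulnC -expnSr.
Qed.

Lemma digitDexp_lt i n m : (m < n)%N -> digit (i + 2 ^ n) m = digit i m.
Proof. by move=> h; rewrite -(digit_modn _ h) modnDr digit_modn. Qed.

Lemma digitDexp i n : (i < 2 ^ n)%N -> digit (i + 2 ^ n) n = 1%N.
Proof. by move=> h; rewrite /digit divnDr ?dvdnn // divnn expn_gt0 divn_small. Qed.

Lemma sum_digits n i : (i < 2 ^ n)%N -> (\sum_(m < n) digit i m * 2 ^ m)%N = i.
Proof.
elim: n i => [|n IH] i hi; first by rewrite big_ord0; case: i hi.
rewrite big_ord_recr /= (eq_bigr (fun m : 'I_n => digit (i %% 2 ^ n) m * 2 ^ m)%N).
  by rewrite IH ?ltn_pmod ?expn_gt0 // digit_top // addnC -divn_eq.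
by move=> m _; rewrite digit_modn.
Qed.

Lemma sum_nonzero_exp2 n :
  (\sum_(m < n.+1) ((m : nat) != 0%N) * 2 ^ m = 2 ^ n.+1 - 2)%N.
Proof.
elim: n => [|n IH]; first by rewrite big_ord1.
rewrite big_ord_recr /= IH.
have : (2 <= 2 ^ n.+1)%N by rewrite -{1}(expn1 2) leq_pexp2l.
rewrite !expnS; lia.
Qed.

Lemma sum_exp2_recl n (x : nat -> nat) :
  (\sum_(m < n.+2) x m * 2 ^ m = x 0%N + 2 * \sum_(m < n.+1) x m.+1 * 2 ^ m)%N.
Proof.
rewrite big_ord_recl expn0 muln1 big_distrr /=; congr (_ + _)%N.
by apply: eq_bigr => m _; rewrite expnS mulnCA.
Qed.

Lemma prod_sum2_digits (R : comPzSemiRingType) n (F : nat -> nat -> R) :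
  \prod_(m < n) \sum_(k < 2) F m k = \sum_(K < 2 ^ n) \prod_(m < n) F m (digit K m).
Proof.
elim: n => [|n IH]; first by rewrite big_ord0 expn0 big_ord1 big_ord0.
rewrite big_ord_recr /= IH big_ord_recl big_ord1 mulrDr !mulr_suml.
rewrite expnS mul2n -addnn big_split_ord /=.
congr (_ + _); apply: eq_bigr => K _; rewrite big_ord_recr /=.
  by rewrite digit_small.
rewrite addnC digitDexp //; congr (_ * _).
by apply: eq_bigr => m _; rewrite digitDexp_lt.
Qed.

Lemma kron_chainE (R : comPzRingType) n (f : nat -> 'M[R]_2) (i j : 'I_(2 ^ n)) :
  kron_chain n f i j = \prod_(m < n) f m.+1 (inord (digit i m)) (inord (digit j m)).
Proof.
elim: n f i j => [|n IH] f i j.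
  by rewrite big_ord0 /= mxE !ord1 eqxx.
rewrite /= castmxE mxE IH big_ord_recr /= mulrC; congr (_ * _).
  by apply: eq_bigr => m _; congr (f _ _ _); apply: val_inj; rewrite /= digit_modn.
by congr (f _ _ _); apply: val_inj; rewrite /= inordK ?digit_lt2 // digit_top.
Qed.

Lemma kron_col_chain (R : pzRingType) N (hN : (0 < N)%N) (f : nat -> 'M[R]_2) (A : 'M[R]_2) :
  A = f N ->
  castmx (esym (exp_split hN), mul1n _) (kron (col 0 A) (kron_chain (N - 1) f)) =
  colsub (widen_ord (exp_half_le N)) (kron_chain N f).
Proof.
move=> ->; case: N hN => // n hN.
move: (exp_split hN) (exp_half_le n.+1); rewrite subn1 => e le.
apply/matrixP => i j; rewrite castmxE !mxE /= castmxE mxE.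
congr (_ * _); [congr (fun_of_matrix _ _ _) | congr (fun_of_matrix _ _ _)].
all: by apply: val_inj; rewrite //= divn_small.
Qed.

Lemma big_multi_idx_cons (R : pzSemiRingType) b bs (F : seq nat -> R) :
  \sum_(s <- multi_idx (b :: bs)) F s =
  \sum_(i <- iota 0 b) \sum_(t <- multi_idx bs) F (i :: t).
Proof. exact: big_allpairs_dep. Qed.

Lemma mem_multi_idx b s : s \in multi_idx b ->
  size s = size b /\ forall k, (k < size s)%N -> (nth 0 s k < nth 0 b k)%N.
Proof.
elim: b s => [|n b IH] s /=; first by rewrite inE => /eqP ->.
case/allpairsP => [[i t]] /= [hi ht ->]; have [hs hnth] := IH _ ht.
split; first by rewrite /= hs.
by case=> [|k] /=; [rewrite mem_iota in hi | apply: hnth].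
Qed.

Lemma nth_full_idx_size s : nth 0%N (full_idx s) (size s).+1 = 0%N.
Proof. by rewrite /= nth_rcons ltnn eqxx. Qed.

Lemma nth_full_idx_lt2 n qs k : qs \in multi_idx (nseq n 2%N) ->
  (nth 0 (full_idx qs) k < 2)%N.
Proof.
case/mem_multi_idx; rewrite size_nseq => szq hq; case: k => //= k.
rewrite nth_rcons; case: (ltnP k (size qs)) => hk; last by case: ifP.
by have := hq k hk; rewrite nth_nseq -szq hk.
Qed.

(* The bound on [x m] is what keeps every carry in {0, 1}. *)
Lemma sum_ripple_carry (R : pzSemiRingType) n (x t : nat -> nat) (c e : nat) :
  (c < 2)%N -> (e < 2)%N -> (forall m, m <= n -> t m < 2)%N ->
  (forall m, m <= n -> x m + (if m == 0 then c else 1) <= t m + 3)%N ->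
  \sum_(qs <- multi_idx (nseq n 2%N)) \prod_(m < n.+1)
     ((x m + nth 0 (c :: rcons qs e) m == t m + 2 * nth 0 (c :: rcons qs e) m.+1)%N%:R : R)
  = (\sum_(m < n.+1) x m * 2 ^ m + c == \sum_(m < n.+1) t m * 2 ^ m + e * 2 ^ n.+1)%N%:R.
Proof.
elim: n x t c => [|n IH] x t c hc he ht hx.
  by rewrite /= big_seq1 !big_ord1 /= !muln1 expn1 (mulnC e) addnC.
have carry_out q : (q < 2)%N ->
  \sum_(qs <- multi_idx (nseq n 2%N)) \prod_(m < n.+2)
     ((x m + nth 0 (c :: rcons (q :: qs) e) m ==
       t m + 2 * nth 0 (c :: rcons (q :: qs) e) m.+1)%N%:R : R)
  = (x 0 + c == t 0 + 2 * q)%N%:R *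
    (\sum_(m < n.+1) x m.+1 * 2 ^ m + q ==
     \sum_(m < n.+1) t m.+1 * 2 ^ m + e * 2 ^ n.+1)%N%:R.
  move=> hq; rewrite -(IH (x \o succn) (t \o succn) q) //.
  - by rewrite mulr_sumr; apply: eq_bigr => qs _; rewrite big_ord_recl.
  - by move=> m hm; apply: ht.
  - by move=> m hm; have := hx m.+1 hm; case: (m == 0%N) => /=; lia.
rewrite big_multi_idx_cons /= !big_cons big_nil addr0 !carry_out //.
rewrite !sum_exp2_recl (expnS 2 n.+1) mulnCA -!natrM -natrD; congr (_ %:R).
have := hx 0%N isT; have := ht 0%N isT.
by do 5 (case: eqP => ? /=); lia.
Qed.

Section AdderBlocks.
Variable R : pzRingType.

Lemma PmE a b : (a < 2)%N -> (b < 2)%N -> Pm R (inord a) (inord b) = (a != b)%:R.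
Proof. by move=> ha hb; rewrite mxE -val_eqE /= !inordK //; case: (a != b). Qed.

Lemma QmE a b : (a < 2)%N -> (b < 2)%N ->
  Qm R (inord a) (inord b) = ((a == 0%N) && (b == 0%N))%:R.
Proof. by move=> ha hb; rewrite mxE !inordK //; case: (_ && _). Qed.

Lemma RmE a b : (a < 2)%N -> (b < 2)%N ->
  Rm R (inord a) (inord b) = ((a == 1%N) && (b == 1%N))%:R.
Proof. by move=> ha hb; rewrite mxE !inordK //; case: (_ && _). Qed.

(* [q'] is the incoming and [q] the outgoing carry; [m != 0] is digit [m] of 2^N - 2. *)
Lemma Mblock_adder N m q k q' a b : (2 <= N)%N -> (m < N)%N ->
  (a < 2)%N -> (b < 2)%N -> (k < 2)%N -> (q < 2)%N -> (q' < 2)%N ->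
  (m = 0%N -> q' = 0%N) -> (m.+1 = N -> q = 0%N /\ b = 0%N) ->
  Mblock R N m.+1 q k q' (inord a) (inord b) =
  (a + b + k + q' == (m != 0%N) + 2 * q)%N%:R.
Proof.
move=> hN hm ha hb hk hq hq' carry_in carry_out; rewrite /Mblock eqSS.
have [mN|mN] := eqVneq m.+1 N.
  have [-> ->] := carry_out mN; have -> : m != 0%N by apply: contraTneq hN => m0; rewrite -mN m0.
  rewrite /Mt_last /blk_row; clear carry_in; move: ha hk hq'.
  by case: a => [|[|//]] _; case: k => [|[|//]] _; case: q' => [|[|//]] _ /=;
    rewrite ?row_mxKl ?row_mxKr ?PmE ?QmE ?mxE.
have [m0|m0] := eqVneq m 0%N.
  rewrite carry_in // /Mt_first /blk_col; clear carry_out; move: ha hb hk hq.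
  by case: a => [|[|//]] _; case: b => [|[|//]] _; case: k => [|[|//]] _;
    case: q => [|[|//]] _ /=; rewrite ?col_mxKu ?col_mxKd ?PmE ?QmE ?RmE ?mxE.
rewrite /Mt_mid /blk /blk_row; clear carry_in carry_out; move: ha hb hk hq hq'.
by case: a => [|[|//]] _; case: b => [|[|//]] _; case: k => [|[|//]] _;
  case: q => [|[|//]] _; case: q' => [|[|//]] _ /=;
  rewrite ?block_mxEv ?col_mxKu ?col_mxKd ?row_mxKl ?row_mxKr ?PmE ?QmE ?RmE ?mxE.
Qed.

End AdderBlocks.

Definition Hfactor {R : pzRingType} N (core : nat -> nat -> nat -> nat -> R)
    (rs qs : seq nat) (n : nat) : 'M[R]_2 :=
  Hcore N core n (nth 0%N (full_idx rs) n) (nth 0%N (full_idx qs) n)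
                 (nth 0%N (full_idx rs) n.-1) (nth 0%N (full_idx qs) n.-1).

Lemma HcoreE (R : pzRingType) N (core : nat -> nat -> nat -> nat -> R) n rn qn rn1 qn1 a b :
  Hcore N core n rn qn rn1 qn1 a b =
  \sum_(k < 2) core n rn1 k rn * Mblock R N n qn k qn1 a b.
Proof. by rewrite summxE; apply: eq_bigr => k _; rewrite mxE. Qed.

Lemma prod_Hfactor_digits (R : comPzRingType) N (core : nat -> nat -> nat -> nat -> R)
    rs qs i j :
  (2 <= N)%N -> qs \in multi_idx (nseq N.-1 2%N) -> (j < 2 ^ N.-1)%N ->
  \prod_(m < N) Hfactor N core rs qs m.+1 (inord (digit i m)) (inord (digit j m)) =
  \sum_(K < 2 ^ N)
    (\prod_(m < N) core m.+1 (nth 0%N (full_idx rs) m) (digit K m) (nth 0%N (full_idx rs) m.+1)) *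
    \prod_(m < N) (digit i m + digit j m + digit K m + nth 0 (full_idx qs) m ==
                   ((m : nat) != 0%N) + 2 * nth 0 (full_idx qs) m.+1)%N%:R.
Proof.
move=> hN hqs hj; have [szq _] := mem_multi_idx hqs; rewrite size_nseq in szq.
under eq_bigr => m _ do rewrite HcoreE.
rewrite (@prod_sum2_digits R N (fun m k =>
  core m.+1 (nth 0%N (full_idx rs) m) k (nth 0%N (full_idx rs) m.+1) *
  Mblock R N m.+1 (nth 0%N (full_idx qs) m.+1) k (nth 0%N (full_idx qs) m)
    (inord (digit i m)) (inord (digit j m)))).
apply: eq_bigr => K _; rewrite -big_split; apply: eq_bigr => m _.
rewrite Mblock_adder ?digit_lt2 ?(nth_full_idx_lt2 _ hqs) // => [|mN].
  by case: (nat_of_ord m).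
have mE : nat_of_ord m = N.-1 by move: mN => /(congr1 predn).
by rewrite mE -szq nth_full_idx_size digit_small // szq.
Qed.

Lemma sum_carries_digits (R : pzSemiRingType) N i j K :
  (0 < N)%N -> (i < 2 ^ N)%N -> (j < 2 ^ N)%N -> (K < 2 ^ N)%N ->
  \sum_(qs <- multi_idx (nseq N.-1 2%N)) \prod_(m < N)
     (digit i m + digit j m + digit K m + nth 0 (full_idx qs) m ==
      ((m : nat) != 0%N) + 2 * nth 0 (full_idx qs) m.+1)%N%:R
  = (i + j + K == 2 ^ N - 2)%N%:R :> R.
Proof.
case: N => // n _ hi hj hK.
rewrite (@sum_ripple_carry R n (fun m => digit i m + digit j m + digit K m)%N
  (fun m => (m != 0%N) : nat)) //; last first.
- move=> m _; have := digit_lt2 i m; have := digit_lt2 j m; have := digit_lt2 K m.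
  by case: (m == 0%N) => /=; lia.
- by move=> m _; case: (m != 0%N).
rewrite sum_nonzero_exp2 !addn0.
by under eq_bigr => m _ do rewrite !mulnDl; rewrite !big_split /= !sum_digits.
Qed.

Lemma sum_mul_eq_pick (R : pzSemiRingType) M (f : nat -> R) a b : (b < M)%N ->
  \sum_(K < M) f K * (a + K == b)%N%:R = if (a <= b)%N then f (b - a)%N else 0.
Proof.
move=> hb; case: leqP => hab.
  have hK : (b - a < M)%N by apply: leq_ltn_trans hb; apply: leq_subr.
  rewrite (bigD1 (Ordinal hK)) //= big1 ?addr0 => [|K hK'].
    by rewrite subnKC // eqxx mulr1.
  rewrite (_ : (a + K == b)%N = false) ?mulr0 //; apply: contraNF hK' => /eqP aKb.
  by apply/eqP/val_inj; rewrite /= -aKb addKn.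
apply: big1 => K _; rewrite (_ : (a + K == b)%N = false) ?mulr0 //.
by apply: contraTF hab => /eqP <-; rewrite -leqNgt leq_addr.
Qed.

Lemma hankel_kron_chain_entry (R : comPzRingType) N Rk (core : nat -> nat -> nat -> nat -> R)
    (i j : 'I_(2 ^ N)) : (2 <= N)%N -> (j < 2 ^ N.-1)%N ->
  hankel N Rk core i j =
  \sum_(rs <- multi_idx (rank_bounds N Rk)) \sum_(qs <- multi_idx (nseq N.-1 2%N))
    kron_chain N (Hfactor N core rs qs) i j.
Proof.
move=> hN hj; have hN0 : (0 < N)%N := ltnW hN.
have h2N : (2 <= 2 ^ N)%N by rewrite -{1}(expn1 2) leq_pexp2l.
under eq_bigr => rs _ do
  under eq_big_seq => qs hqs do rewrite kron_chainE prod_Hfactor_digits //.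
under eq_bigr => rs _ do rewrite exchange_big /=.
rewrite exchange_big /=.
under eq_bigr => K _ do under eq_bigr => rs _ do rewrite -mulr_sumr.
under eq_bigr => K _ do rewrite -mulr_suml sum_carries_digits ?ltn_ord //.
rewrite (sum_mul_eq_pick (tt_entry N Rk core)) ?ltn_subrL ?expn_gt0 // mxE.
by rewrite subnDA leq_subRL // [(2 + _)%N]addnC.
Qed.

(* [hR0] and [hRN] are built into [full_idx], which fixes r_0 = r_N = 1. *)
Theorem mainTheorem7 (R : realFieldType) (N : nat) (hN : (2 <= N)%N)
  (Rk : nat -> nat) (hR0 : Rk 0%N = 1%N) (hRN : Rk N = 1%N)
  (core : nat -> nat -> nat -> nat -> R) :
  hankel_left N Rk core =
  \sum_(rs <- multi_idx (rank_bounds N Rk))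
   \sum_(qs <- multi_idx (nseq N.-1 2%N))
     castmx (esym (exp_split (ltnW hN)), mul1n _)
       (kron (col 0 (Hcore N core N 0 0
                       (nth 0%N (full_idx rs) N.-1) (nth 0%N (full_idx qs) N.-1)))
             (kron_chain (N - 1) (fun n =>
                Hcore N core n (nth 0%N (full_idx rs) n) (nth 0%N (full_idx qs) n)
                               (nth 0%N (full_idx rs) n.-1) (nth 0%N (full_idx qs) n.-1)))).
Proof.
have nth_full_idx_N s : size s = N.-1 -> nth 0%N (full_idx s) N = 0%N.
  by move=> szs; have := nth_full_idx_size s; rewrite szs (prednK (ltnW hN)).
transitivity (\sum_(rs <- multi_idx (rank_bounds N Rk)) \sum_(qs <- multi_idx (nseq N.-1 2%N))
  colsub (widen_ord (exp_half_le N)) (kron_chain N (Hfactor N core rs qs))); last first.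
  apply: eq_big_seq => rs /mem_multi_idx [szr _].
  apply: eq_big_seq => qs /mem_multi_idx [szq _].
  rewrite (kron_col_chain _ (f := Hfactor N core rs qs)) // /Hfactor.
  by rewrite nth_full_idx_N ?nth_full_idx_N // ?szr ?szq ?size_map ?size_iota ?size_nseq.
apply/matrixP => i j; rewrite [LHS]mxE (hankel_kron_chain_entry _ _ _ hN).
  by rewrite summxE; apply: eq_bigr => rs _; rewrite summxE; apply: eq_bigr => qs _; rewrite mxE.
by rewrite /= -subn1.
Qed.
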